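(* Let $n, d, d_k, d_v \ge 1$, let $W_Q, W_K \in \mathbb{R}^{d\times d_k}$, $W_V \in \mathbb{R}^{d \times d_v}$ be fixed (deterministic) matrices, and for $x \in \mathbb{R}^{n\times d}$ let $$\mathrm{Attn}(x) = \mathrm{softmax}\!\left(\frac{(xW_Q)(xW_K)^\top}{\sqrt{d_k}}\right) x W_V,$$ with softmax applied row-wise. Let $h^{(0)} \in \mathbb{R}^{n\times d}$ be a random matrix whose rows $h^{(0)}_1,\dots,h^{(0)}_n$ are independent with $h^{(0)}_i \sim N(0,\sigma^2 I_d)$ for some $\sigma>0$. Then $\mathbb{E}[\mathrm{Attn}(h^{(0)})] = 0$.
   Context: Row-wise softmax: for $S\in\mathbb{R}^{n\times n}$, $\mathrm{softmax}(S)_{ij} = e^{S_{ij}}/\sum_{k} e^{S_{ik}}$. The expectation is entrywise. *)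

From HB Require Import structures.
From mathcomp Require Import all_boot all_order all_algebra.
From mathcomp Require Import all_classical all_reals all_analysis.
Set Implicit Arguments. Unset Strict Implicit. Unset Printing Implicit Defensive.
Import Order.TTheory GRing.Theory Num.Theory.
Local Open Scope ring_scope.
Local Open Scope classical_set_scope.

Definition softmax_rows (R : realType) (n : nat) (S : 'M[R]_(n, n)) : 'M[R]_(n, n) :=
  \matrix_(i < n, j < n) (expR (S i j) / \sum_(k < n) expR (S i k)).

Definition attn (R : realType) (n d dk dv : nat)
    (WQ WK : 'M[R]_(d, dk)) (WV : 'M[R]_(d, dv)) (x : 'M[R]_(n, d)) : 'M[R]_(n, dv) :=
  softmax_rows ((Num.sqrt (dk%:R))^-1 *: ((x *m WQ) *m (x *m WK)^T)) *m (x *m WV).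

(* h : T -> R^{n x d} is a random matrix whose rows are independent with
   h_i ~ N(0, sigma^2 I_d): every entry is a real random variable (measurable)
   and the joint law of the entries is the product of N(0, sigma^2) laws,
   i.e. for all measurable sets B i j,
     P[ forall i j, h_ij \in B i j ] = prod_i prod_j N(0,sigma^2)(B i j).
   (Rows independent + each row N(0, sigma^2 I_d) is exactly this.) *)
Definition gaussian_rows_matrix (d0 : measure_display) (T : measurableType d0)
    (R : realType) (P : probability T R) (n d : nat) (sigma : R)
    (h : T -> 'M[R]_(n, d)) : Prop :=
  (forall (i : 'I_n) (j : 'I_d), measurable_fun setT (fun w => h w i j)) /\
  (forall B : 'I_n -> 'I_d -> set R,
      (forall i j, measurable (B i j)) ->
      P [set w | forall i j, B i j (h w i j)] =
      (\prod_(i < n) \prod_(j < d) normal_prob 0 sigma (B i j))%E).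

(** Softmax attention is odd: the scores [(x W_Q)(x W_K)^T] are quadratic in
    [x], so [Attn (-x) = - Attn x].  A centred Gaussian matrix [h] has the same
    law as [-h] (both laws agree on measurable rectangles, which form a
    pi-system generating the product sigma-algebra), hence
    [E[Attn h] = E[Attn (-h)] = - E[Attn h]], i.e. [E[Attn h] = 0].  The
    expectation is finite because the softmax weights lie in [[0, 1]], so that
    [|Attn(x)_ij| <= sum_kl |x_kl| |W_V lj|], and Gaussians have a finite first
    absolute moment: [|x| e^(-x^2/2s^2)] is dominated by a multiple of
    [e^(-x^2/8s^2)]. *)

From HB Require Import structures.
From mathcomp Require Import all_boot all_order all_algebra.
From mathcomp Require Import all_classical all_reals all_analysis.
From mathcomp Require Import measurable_realfun ring lra.

Set Implicit Arguments.
Unset Strict Implicit.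
Unset Printing Implicit Defensive.

Import Order.TTheory GRing.Theory Num.Theory.
Local Open Scope classical_set_scope.
Local Open Scope ring_scope.

Section integral_density.
Local Open Scope ereal_scope.
Context d (T : measurableType d) (R : realType).
Variables (nu : {finite_measure set T -> \bar R})
  (mu : {sigma_finite_measure set T -> \bar R}) (g : T -> \bar R).
Hypotheses (mg : measurable_fun [set: T] g)
  (nuE : forall A, measurable A -> nu A = \int[mu]_(x in A) g x).

Lemma ge0_integral_density (f : T -> \bar R) :
  (forall x, 0 <= f x) -> measurable_fun [set: T] f ->
  \int[nu]_x f x = \int[mu]_x (f x * g x).
Proof.
move=> f0 mf.
have numu : nu `<< mu.
  apply/null_content_dominatesP => A mA muA0.
  by rewrite nuE // null_set_integral //; exact: measurable_funTS.
pose rn := Radon_Nikodym_SigmaFinite.f nu mu.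
have rn_int : mu.-integrable [set: T] rn.
  exact: Radon_Nikodym_SigmaFinite.f_integrable.
have rnE : ae_eq mu [set: T] rn g.
  apply: integral_ae_eq => // A _ mA.
  by rewrite -Radon_Nikodym_SigmaFinite.f_integral // nuE.
rewrite -(Radon_Nikodym_SigmaFinite.change_of_variables numu) //.
apply: ae_eq_integral => //.
- exact/emeasurable_funM/(measurable_int _ rn_int).
- exact: emeasurable_funM.
- exact: ae_eqe_mul2l.
Qed.

End integral_density.

Lemma normal_fun_abs_le (R : realType) (m s x : R) : 0 < s ->
  `|x - m| * normal_fun m s x <= 2 * s * normal_fun m (2 * s) x.
Proof.
move=> s0; rewrite /normal_fun -(real_normK (num_real (x - m))).
set y := `|x - m|; have y0 : 0 <= y := normr_ge0 _.
have sn0 : s != 0 by rewrite gt_eqF.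
set b := 3 * y ^+ 2 / (8 * s ^+ 2).
have -> : - y ^+ 2 / (s ^+ 2 *+ 2) = - y ^+ 2 / ((2 * s) ^+ 2 *+ 2) - b.
  by rewrite /b; field.
rewrite expRD mulrCA [X in _ <= X]mulrC ler_pM2l ?expR_gt0 //.
rewrite expRN ler_pdivrMr ?expR_gt0 //.
(* [expR b >= 1 + b] leaves [4 s y <= 8 s^2 + 3 y^2]. *)
apply: le_trans (ler_wpM2l _ (expR_ge1Dx b)); last by rewrite mulr_ge0 ?ltW.
rewrite mulrDr mulr1 /b.
have -> : 2 * s * (3 * y ^+ 2 / (8 * s ^+ 2)) = 3 * y ^+ 2 / (4 * s).
  by field.
have s4 : 0 < 4 * s by rewrite mulr_gt0.
by rewrite -(ler_pM2r s4) mulrDl divfK ?gt_eqF //; nra.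
Qed.

Section normal_prob.
Local Open Scope ereal_scope.
Context {R : realType}.
Local Notation mu := (@lebesgue_measure R).
Local Notation RR := (measurableTypeR R).

Lemma normal_prob_abs_moment_lty (m s : R) : (0 < s)%R ->
  \int[normal_prob m s]_x `|x - m|%:E < +oo.
Proof.
move=> s0; have sn0 : s != 0%R by rewrite gt_eqF.
have s2n0 : (2 * s != 0)%R by rewrite mulf_neq0 // pnatr_eq0.
have mpdf t : measurable_fun [set: R] (fun x => (normal_pdf m t x)%:E).
  by apply/measurable_EFinP; exact: measurable_normal_pdf.
have mabs : measurable_fun [set: R] (fun x => `|x - m|%:E).
  by apply/measurable_EFinP; apply: measurableT_comp => //; exact: measurable_funB.
rewrite (@ge0_integral_density _ _ _ (normal_prob m s) mu _ (mpdf s)) //.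
pose C := (2 * s * normal_peak s / normal_peak (2 * s))%R.
have C0 : (0 <= C)%R by rewrite /C divr_ge0 ?mulr_ge0 ?normal_peak_ge0 ?ltW.
apply: (@le_lt_trans _ _ (\int[mu]_x (C%:E * (normal_pdf m (2 * s) x)%:E))).
  apply: ge0_le_integral => //.
  - by move=> x _; rewrite mule_ge0 // lee_fin normal_pdf_ge0.
  - exact: emeasurable_funM mabs (mpdf s).
  - exact: emeasurable_funM (measurable_cst _) (mpdf (2 * s)%R).
  - move=> x _; rewrite -!EFinM lee_fin !normal_pdfE //=.
    have -> : (C * (normal_peak (2 * s) * normal_fun m (2 * s) x) =
        normal_peak s * (2 * s * normal_fun m (2 * s) x))%R.
      by rewrite /C; field; rewrite gt_eqF // normal_peak_gt0.
    by rewrite mulrCA ler_pM2l ?normal_peak_gt0 // normal_fun_abs_le.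
rewrite ge0_integralZl ?lee_fin //.
- by rewrite integral_normal_pdf mule1 ltry.
- exact: mpdf.
- by move=> x _; rewrite lee_fin normal_pdf_ge0.
Qed.

Lemma normal_prob0N (s : R) (B : set R) : s != 0%R -> measurable B ->
  normal_prob 0 s (-%R @^-1` B) = normal_prob 0 s B.
Proof.
move=> s0 mB; rewrite /normal_prob.
have pdfN x : normal_pdf 0 s (- x) = normal_pdf 0 s x.
  by rewrite !normal_pdfE //= /normal_fun !subr0 sqrrN.
transitivity (\int[mu]_(x in -%R @^-1` B)
    ((fun y => (normal_pdf 0 s y)%:E) \o -%R) x).
  by apply: eq_integral => x _; rewrite /= pdfN.
have mN : measurable_fun [set: RR] (-%R : RR -> RR) by [].
rewrite -(ge0_integral_pushforward mN) //.
- by apply: eq_measure_integral => A mA _; exact: lebesgue_measureN.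
- by apply/measurable_funTS/measurable_EFinP; exact: measurable_normal_pdf.
- by move=> y _; rewrite lee_fin normal_pdf_ge0.
Qed.

End normal_prob.

(* [g_sigma_algebraType] needs a [pointedType], which matrices are not. *)
Definition mx_carrier (R : realType) (n d : nat) : Type := 'M[R]_(n, d).
HB.instance Definition _ R n d := Choice.on (mx_carrier R n d).
HB.instance Definition _ R n d := isPointed.Build (mx_carrier R n d) 0.

Section matrix_sigma_algebra.
Variables (R : realType) (n d : nat).

Definition mx_rect (B : 'I_n -> 'I_d -> set R) : set (mx_carrier R n d) :=
  [set M | forall i j, B i j (M i j)].

Definition mx_rects : set (set (mx_carrier R n d)) :=
  [set mx_rect B | B in [set B | forall i j, measurable (B i j)]].

Definition mx_sigma := g_sigma_algebraType mx_rects.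

Lemma preimage_mx_entry (i : 'I_n) (j : 'I_d) (A : set R) :
  (fun M : mx_carrier R n d => M i j) @^-1` A =
  mx_rect (fun i' j' => if (i' == i) && (j' == j) then A else setT).
Proof.
apply/seteqP; split => M /=.
- by move=> MA i' j'; case: ifP => [/andP[/eqP-> /eqP->]|].
- by move=> /(_ i j); rewrite !eqxx.
Qed.

Lemma measurable_mx_entry (i : 'I_n) (j : 'I_d) :
  measurable_fun [set: mx_sigma] (fun M : mx_sigma => M i j).
Proof.
move=> _ A mA; rewrite setTI preimage_mx_entry; apply: sub_sigma_algebra.
exists (fun i' j' => if (i' == i) && (j' == j) then A else setT) => //.
by move=> i' j'; case: ifP.
Qed.

Lemma measurable_fun_mxP d' (T : measurableType d') (f : T -> mx_sigma) :
  measurable_fun [set: T] f <->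
  forall i j, measurable_fun [set: T] (fun w => (f w : 'M[R]_(n, d)) i j).
Proof.
split => [mf i j|mf].
  exact: measurableT_comp (measurable_mx_entry i j) mf.
apply: (@measurability _ _ _ mx_sigma _ _ mx_rects erefl).
move=> _ [_ [B mB <-] <-]; rewrite setTI.
have -> : f @^-1` mx_rect B =
    \bigcap_(i in [set: 'I_n]) \bigcap_(j in [set: 'I_d])
      ((fun w => (f w : 'M[R]_(n, d)) i j) @^-1` B i j).
  by apply/seteqP; split => [w fB i _ j _|w fB i j]; [exact: fB|exact: fB].
apply: fin_bigcap_measurable; first exact: finite_finset.
move=> i _; apply: fin_bigcap_measurable; first exact: finite_finset.
by move=> j _; rewrite -[X in measurable X]setTI; exact: mf.
Qed.

Lemma mx_rects_setI_closed : setI_closed mx_rects.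
Proof.
move=> _ _ [B1 mB1 <-] [B2 mB2 <-].
exists (fun i j => B1 i j `&` B2 i j); first by move=> i j; exact: measurableI.
apply/seteqP; split => M /=.
- by move=> MB; split => i j; have [] := MB i j.
- by move=> [MB1 MB2] i j; split; [exact: MB1|exact: MB2].
Qed.

Lemma mx_measure_unique (m1 m2 : {measure set mx_sigma -> \bar R}) :
  (m1 [set: mx_sigma] < +oo)%E ->
  (forall B, (forall i j, measurable (B i j)) ->
    m1 (mx_rect B) = m2 (mx_rect B)) ->
  forall A, measurable A -> m1 A = m2 A.
Proof.
move=> m1_fin m12 A mA.
apply: (@measure_unique _ _ mx_sigma mx_rects (fun=> setT) erefl
  mx_rects_setI_closed) => //.
- by move=> _; exists (fun _ _ => setT) => //; apply/seteqP.
- by rewrite bigcup_const.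
- by move=> _ [B mB <-]; exact: m12.
Qed.

End matrix_sigma_algebra.

Section same_law.
Local Open Scope ereal_scope.
Context d1 d2 (X : measurableType d1) (Y : measurableType d2) (R : realType).
Variables (mu : {measure set X -> \bar R}) (phi psi : X -> Y).
Hypotheses (mphi : measurable_fun [set: X] phi)
  (mpsi : measurable_fun [set: X] psi).
Hypothesis same_law :
  forall A, measurable A -> mu (phi @^-1` A) = mu (psi @^-1` A).

Lemma eq_integral_same_law (f : Y -> \bar R) : measurable_fun [set: Y] f ->
  mu.-integrable [set: X] (f \o phi) -> mu.-integrable [set: X] (f \o psi) ->
  \int[mu]_x f (phi x) = \int[mu]_x f (psi x).
Proof.
move=> mf intphi intpsi.
have := integral_pushforward mphi mf (D := [set: Y]).
have := integral_pushforward mpsi mf (D := [set: Y]).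
rewrite !preimage_setT => <- // <- //.
by apply: eq_measure_integral => A mA _; exact: same_law.
Qed.

End same_law.

Section gaussian_rows_matrix.
Context d0 (T : measurableType d0) (R : realType) (P : probability T R).
Variables (n d : nat) (sigma : R).
Implicit Types h : T -> 'M[R]_(n, d).

Lemma gaussian_rows_matrix_entry h (k : 'I_n) (l : 'I_d) (B : set R) :
  gaussian_rows_matrix P sigma h -> measurable B ->
  P [set w | B (h w k l)] = normal_prob 0 sigma B.
Proof.
move=> [_ hP] mB.
pose C i j := if (i == k) && (j == l) then B else [set: R].
have -> : [set w | B (h w k l)] = [set w | forall i j, C i j (h w i j)].
  exact: (congr1 (preimage h) (preimage_mx_entry k l B)).
rewrite hP => [|i j]; last by rewrite /C; case: ifP.
rewrite (bigD1 k) //= (bigD1 l) //= /C !eqxx /=.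
rewrite big1 => [|j /negbTE->]; last by rewrite probability_setT.
rewrite big1 => [|i /negbTE->]; first by rewrite !mule1.
by rewrite big1 // => j _; rewrite probability_setT.
Qed.

Lemma measurable_gaussian_rows_matrix h : gaussian_rows_matrix P sigma h ->
  measurable_fun [set: T] (h : T -> mx_sigma R n d).
Proof. by move=> [mh _]; apply/measurable_fun_mxP. Qed.

Lemma gaussian_rows_matrixN h : sigma != 0 ->
  gaussian_rows_matrix P sigma h ->
  gaussian_rows_matrix P sigma (fun w => - h w).
Proof.
move=> s0 [mh hP]; split => [i j|B mB].
  by under eq_fun do rewrite mxE; exact: measurable_funN.
have mNB i j : measurable (-%R @^-1` B i j).
  by rewrite -[X in measurable X]setTI; exact: measurable_funN.
transitivity (P [set w | forall i j, (-%R @^-1` B i j) (h w i j)]).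
  by congr (P _); apply/seteqP; split => w /= + i j => /(_ i j); rewrite mxE.
rewrite (hP _ mNB); apply: eq_bigr => i _; apply: eq_bigr => j _.
exact: normal_prob0N.
Qed.

Lemma gaussian_rows_matrix_same_law h1 h2 :
  gaussian_rows_matrix P sigma h1 -> gaussian_rows_matrix P sigma h2 ->
  forall A : set (mx_sigma R n d), measurable A ->
  P ((h1 : T -> mx_sigma R n d) @^-1` A) =
  P ((h2 : T -> mx_sigma R n d) @^-1` A).
Proof.
move=> g1 g2.
have mh1 := measurable_gaussian_rows_matrix g1.
have mh2 := measurable_gaussian_rows_matrix g2.
apply: (@mx_measure_unique R n d (pushforward P (h1 : T -> mx_sigma R n d))
  (pushforward P (h2 : T -> mx_sigma R n d))).
  by rewrite -[ltLHS]/(P [set: T]) probability_setT ltry.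
by move=> B mB; exact: etrans (g1.2 B mB) (esym (g2.2 B mB)).
Qed.

Lemma integrable_gaussian_rows_matrix_abs_entry h (k : 'I_n) (l : 'I_d) :
  0 < sigma -> gaussian_rows_matrix P sigma h ->
  P.-integrable [set: T] (fun w => `|h w k l|%:E).
Proof.
move=> s0 g; pose hkl : T -> measurableTypeR R := fun w => h w k l.
have mhkl : measurable_fun [set: T] hkl := g.1 k l.
have mabs : measurable_fun [set: measurableTypeR R] (fun x => `|x|%:E).
  by apply/measurable_EFinP; exact: normr_measurable.
apply/integrableP; split; first exact: measurableT_comp mabs mhkl.
under eq_integral do rewrite abse_EFin normr_id.
rewrite -[X in (X < _)%E]/(\int[P]_(w in hkl @^-1` setT)
  ((fun x => `|x|%:E) \o hkl) w)%E.
rewrite -ge0_integral_pushforward //.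
rewrite (eq_measure_integral (normal_prob 0 sigma)) => [|A mA _]; last first.
  exact: gaussian_rows_matrix_entry.
under eq_integral do rewrite -[x in `|x|]subr0.
exact: normal_prob_abs_moment_lty.
Qed.

End gaussian_rows_matrix.

Section softmax_rows.
Variables (R : realType) (n : nat).

Lemma expR_le_sum_expR (F : 'I_n -> R) (k : 'I_n) :
  expR (F k) <= \sum_(l < n) expR (F l).
Proof. by rewrite (bigD1 k) //= lerDl sumr_ge0 // => l _; exact: expR_ge0. Qed.

Lemma sum_expR_gt0 (F : 'I_n -> R) (k : 'I_n) : 0 < \sum_(l < n) expR (F l).
Proof. exact: lt_le_trans (expR_gt0 _) (expR_le_sum_expR F k). Qed.

Variable S : 'M[R]_(n, n).

Lemma softmax_rowsE (i k : 'I_n) :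
  softmax_rows S i k = expR (S i k - ln (\sum_(l < n) expR (S i l))).
Proof. by rewrite mxE expRD expRN lnK // posrE (sum_expR_gt0 _ k). Qed.

Lemma softmax_rows_ge0 (i k : 'I_n) : 0 <= softmax_rows S i k.
Proof. by rewrite softmax_rowsE expR_ge0. Qed.

Lemma softmax_rows_le1 (i k : 'I_n) : softmax_rows S i k <= 1.
Proof.
by rewrite mxE ler_pdivrMr ?mul1r ?expR_le_sum_expR ?(sum_expR_gt0 _ k).
Qed.

End softmax_rows.

Section attn.
Variables (R : realType) (n d dk dv : nat).
Variables (WQ WK : 'M[R]_(d, dk)) (WV : 'M[R]_(d, dv)).

Lemma attnN (x : 'M[R]_(n, d)) : attn WQ WK WV (- x) = - attn WQ WK WV x.
Proof. by rewrite /attn !mulNmx !raddfN /= opprK. Qed.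

Lemma attn_abs_le (x : 'M[R]_(n, d)) i j :
  `|attn WQ WK WV x i j| <= \sum_(k < n) \sum_(l < d) `|x k l| * `|WV l j|.
Proof.
rewrite mxE; apply: le_trans (ler_norm_sum _ _ _) _; apply: ler_sum => k _.
rewrite normrM ger0_norm ?softmax_rows_ge0 //.
apply: le_trans (ler_piMl _ (softmax_rows_le1 _ i k)) _ => //.
rewrite mxE; apply: le_trans (ler_norm_sum _ _ _) _; apply: ler_sum => l _.
by rewrite normrM.
Qed.

Lemma measurable_mulmx_entry m (W : 'M[R]_(d, m)) (k : 'I_n) (c : 'I_m) :
  measurable_fun [set: mx_sigma R n d]
    (fun x => ((x : 'M[R]_(n, d)) *m W) k c).
Proof.
rewrite (_ : (fun x => _) =
    fun x : mx_sigma R n d => \sum_(b < d) x k b * W b c).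
  apply: measurable_sum => b; apply: measurable_funM => //.
  exact: measurable_mx_entry.
by apply/funext => x; rewrite mxE.
Qed.

Lemma measurable_attn (i : 'I_n) (j : 'I_dv) :
  measurable_fun [set: mx_sigma R n d] (fun x => attn WQ WK WV x i j).
Proof.
pose S (x : mx_sigma R n d) :=
  (Num.sqrt dk%:R)^-1 *: ((x *m WQ) *m (x *m WK)^T) : 'M[R]_n.
have mS k : measurable_fun [set: mx_sigma R n d] (fun x => S x i k).
  rewrite (_ : (fun x => _) = fun x => (Num.sqrt dk%:R)^-1 *
      \sum_(a < dk) ((x : 'M[R]_(n, d)) *m WQ) i a * (x *m WK) k a).
    apply: measurable_funM => //; apply: measurable_sum => a.
    by apply: measurable_funM; exact: measurable_mulmx_entry.
  apply/funext => x; rewrite !mxE; congr (_ * _).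
  by apply: eq_bigr => a _; rewrite [_^T a k]mxE.
rewrite (_ : (fun x => _) = fun x => \sum_(k < n)
    expR (S x i k - ln (\sum_(l < n) expR (S x i l))) * (x *m WV) k j).
  apply: measurable_sum => k; apply: measurable_funM; last first.
    exact: measurable_mulmx_entry.
  apply: measurableT_comp; first exact: measurable_expR.
  apply: measurable_funB; first exact: mS.
  apply: measurableT_comp; first exact: measurable_ln.
  by apply: measurable_sum => l; exact: measurableT_comp (mS l).
by apply/funext => x; rewrite mxE; apply: eq_bigr => k _; rewrite softmax_rowsE.
Qed.

End attn.

Lemma integrable_attn_gaussian_rows_matrix (R : realType) (n d dk dv : nat)
    (WQ WK : 'M[R]_(d, dk)) (WV : 'M[R]_(d, dv))
    d0 (T : measurableType d0) (P : probability T R) (sigma : R)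
    (h : T -> 'M[R]_(n, d)) (i : 'I_n) (j : 'I_dv) :
  0 < sigma -> gaussian_rows_matrix P sigma h ->
  P.-integrable [set: T] (fun w => (attn WQ WK WV (h w) i j)%:E).
Proof.
move=> s0 g.
pose b w := \sum_(k < n) \sum_(l < d) `|h w k l| * `|WV l j|.
have b0 w : 0 <= b w.
  by rewrite sumr_ge0 // => k _; rewrite sumr_ge0 // => l _; rewrite mulr_ge0.
apply: (le_integrable measurableT (g := fun w => (b w)%:E)).
- apply/measurable_EFinP; apply: measurableT_comp (measurable_attn _ _ _ i j) _.
  exact: measurable_gaussian_rows_matrix g.
- by move=> w _; rewrite !abse_EFin lee_fin (ger0_norm (b0 w)) attn_abs_le.
have -> : (fun w => (b w)%:E) = fun w =>
    (\sum_(k < n) \sum_(l < d) `|h w k l|%:E * `|WV l j|%:E)%E.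
  apply/funext => w; rewrite -sumEFin; apply: eq_bigr => k _.
  by rewrite -sumEFin; apply: eq_bigr => l _; rewrite EFinM.
apply: (integrable_sum measurableT) => k _.
apply: (integrable_sum measurableT) => l _.
exact: (integrableZr measurableT `|WV l j|
  (integrable_gaussian_rows_matrix_abs_entry k l s0 g)).
Qed.

Theorem proposition3 (R : realType) (n d dk dv : nat)
    (hn : (1 <= n)%N) (hd : (1 <= d)%N) (hdk : (1 <= dk)%N) (hdv : (1 <= dv)%N)
    (WQ WK : 'M[R]_(d, dk)) (WV : 'M[R]_(d, dv))
    (d0 : measure_display) (T : measurableType d0) (P : probability T R)
    (sigma : R) (hsigma : 0 < sigma) (h : T -> 'M[R]_(n, d))
    (hh : gaussian_rows_matrix P sigma h) :
  forall (i : 'I_n) (j : 'I_dv),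
    P.-integrable setT (fun w => ((attn WQ WK WV (h w)) i j)%:E) /\
    ('E_P[fun w => (attn WQ WK WV (h w)) i j])%E = 0%E.
Proof.
move=> i j; have hhN := gaussian_rows_matrixN (lt0r_neq0 hsigma) hh.
have intF := integrable_attn_gaussian_rows_matrix WQ WK WV i j hsigma hh.
have intFN := integrable_attn_gaussian_rows_matrix WQ WK WV i j hsigma hhN.
split => //; rewrite unlock; set E := (\int[P]_w _)%E.
have mF : measurable_fun [set: mx_sigma R n d]
    (fun x => (attn WQ WK WV x i j)%:E).
  by apply/measurable_EFinP; exact: measurable_attn.
have EN : E = (- E)%E.
  rewrite {1}/E (eq_integral_same_law (measurable_gaussian_rows_matrix hh)
    (measurable_gaussian_rows_matrix hhN) (gaussian_rows_matrix_same_law hh hhN)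
    mF intF intFN).
  under eq_integral do rewrite /= attnN mxE EFinN.
  exact: integralN (integrable_add_def measurableT intF).
have [r Er] : exists r, E = r%:E.
  by exists (fine E); rewrite fineK // (integrable_fin_num measurableT intF).
by move: EN; rewrite Er -EFinN => -[] rN; congr EFin; lra.
Qed.
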